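(* Let $k\ge2$, $n\ge k$, $N=\binom nk$ and $1\le M\le N-1$. Let $H$ be the graph whose vertices are the labeled $k$-uniform hypergraphs on $[n]$ with exactly $M$ hyperedges, two hypergraphs $\mathcal H_1,\mathcal H_2$ being adjacent iff there are distinct $k$-sets $h_1\in E(\mathcal H_1)\setminus E(\mathcal H_2)$, $h_2\in E(\mathcal H_2)\setminus E(\mathcal H_1)$ with $\mathcal H_1-h_1=\mathcal H_2-h_2$. Let $m_{\mathcal H}(\mathcal H')=\frac{1}{M(N-M)+1}$ if $\mathcal H'=\mathcal H$ or $\mathcal H'$ is adjacent to $\mathcal H$, and $0$ otherwise. Then for all distinct $\mathcal H_1,\mathcal H_2\in V(H)$, \[\kappa(\mathcal H_1,\mathcal H_2)\ge\frac{N}{M(N-M)+1}.\]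
   Context: $\mathcal H-h$ denotes the hypergraph obtained by deleting hyperedge $h$. For a graph $H$ with random walk $m$ (each $m_x$ a probability distribution supported on $x$ and its neighbors), $d$ the graph distance on $H$, the transportation distance is $W(m_1,m_2)=\inf_A\sum_{x,y}A(x,y)d(x,y)$ over couplings $A$ of $m_1,m_2$, and the Ollivier Ricci curvature is $\kappa(x,y)=1-W(m_x,m_y)/d(x,y)$. *)

From Stdlib Require Import Reals ClassicalEpsilon.
From mathcomp Require Import all_boot.
Set Implicit Arguments. Unset Strict Implicit. Unset Printing Implicit Defensive.

Definition is_hyp (n k M : nat) (E : {set {set 'I_n}}) : bool :=
  [forall h in E, #|h| == k] && (#|E| == M).

Notation hgraph n k M := {E : {set {set 'I_n}} | @is_hyp n k M E}.

Definition hadj (n : nat) (E1 E2 : {set {set 'I_n}}) : bool :=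
  [exists h1 : {set 'I_n}, exists h2 : {set 'I_n},
     [&& h1 != h2, h1 \in E1 :\: E2, h2 \in E2 :\: E1 & E1 :\ h1 == E2 :\ h2]].

Definition Hadj (n k M : nat) : rel (hgraph n k M) :=
  fun x y => hadj (val x) (val y).

Definition reach_in (n k M : nat) (i : nat) (x y : hgraph n k M) : bool :=
  [exists p : i.-tuple (hgraph n k M), path (@Hadj n k M) x p && (last x p == y)].

(* Graph distance: least i with a walk of length i (H is connected, so a
   shortest path has fewer than #|V(H)| steps). *)
Definition hdist (n k M : nat) (x y : hgraph n k M) : nat :=
  find (fun i => reach_in i x y) (iota 0 #|{: hgraph n k M}|).

Open Scope R_scope.

Definition hwalk (n k M : nat) (x y : hgraph n k M) : R :=
  if (y == x) || Hadj x y
  then / INR (M * ('C(n, k) - M) + 1)%N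
  else 0.

Definition Rsum (T : finType) (f : T -> R) : R := \big[Rplus/0]_(t : T) f t.

Definition is_coupling (T : finType) (m1 m2 : T -> R) (A : T -> T -> R) : Prop :=
  (forall x y, 0 <= A x y) /\
  (forall x, Rsum (fun y => A x y) = m1 x) /\
  (forall y, Rsum (fun x => A x y) = m2 y).

Definition is_lb (S : R -> Prop) (w : R) : Prop := forall x, S x -> w <= x.
Definition is_glb (S : R -> Prop) (w : R) : Prop :=
  is_lb S w /\ forall w', is_lb S w' -> w' <= w.

Definition Rinf (S : R -> Prop) : R := epsilon (inhabits 0) (fun w => is_glb S w).

Definition transport (n k M : nat) (m1 m2 : hgraph n k M -> R) : R :=
  Rinf (fun c => exists A, is_coupling m1 m2 A /\
          c = Rsum (fun x => Rsum (fun y => A x y * INR (hdist x y)))).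

Definition kappa (n k M : nat) (x y : hgraph n k M) : R :=
  1 - transport (hwalk x) (hwalk y) / INR (hdist x y).

(* Let c = 1/(M(N-M)+1) be the mass of the random walk m_x on each vertex of
   the closed neighbourhood of x.  For adjacent x, y with x - a = y - b, the
   transposition of the k-sets a and b acts on edge sets as an automorphism
   tau of H with tau x = y.  The map fixing x and y and applying tau elsewhere
   is an involution carrying the closed neighbourhood of x onto that of y;
   every vertex moves by at most one step, and only (M-1)(N-M-1) neighbours
   of x move at all.  This bijection is a coupling of m_x and m_y, whence
   W(m_x, m_y) <= (M-1)(N-M-1) c = 1 - N c.  Composing such bijections along
   a shortest path (costs add by the triangle inequality) gives
   W(m_x, m_y) <= d(x, y) (1 - N c), i.e. kappa(x, y) >= N c. *)

From Stdlib Require Import Reals Lra Lia ClassicalEpsilon.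
From mathcomp Require Import all_boot.
From HB Require Import structures.
From mathcomp Require Import fingroup perm zify.
Set Implicit Arguments. Unset Strict Implicit. Unset Printing Implicit Defensive.
Open Scope R_scope.

Lemma Rplus_associative : associative Rplus.
Proof. by move=> x y z; rewrite Rplus_assoc. Qed.
HB.instance Definition _ :=
  Monoid.isComLaw.Build R R0 Rplus Rplus_associative Rplus_comm Rplus_0_l.

Section RealSums.
Variable T : finType.
Implicit Types f g : T -> R.

Lemma Rsum_ext f g : (forall t, f t = g t) -> Rsum f = Rsum g.
Proof. by move=> fg; apply: eq_bigr => t _; apply: fg. Qed.

Lemma Rsum_le f g : (forall t, f t <= g t) -> Rsum f <= Rsum g.
Proof.
move=> fg; apply: (big_ind2 (fun a b => a <= b)) => //; first exact: Rle_refl.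
by move=> *; apply: Rplus_le_compat.
Qed.

Lemma Rsum_ge0 f : (forall t, 0 <= f t) -> 0 <= Rsum f.
Proof.
move=> f_ge0; apply: (big_ind (fun a => 0 <= a)) => //; first exact: Rle_refl.
by move=> *; apply: Rplus_le_le_0_compat.
Qed.

Lemma Rsum_add f g : Rsum (fun t => f t + g t) = Rsum f + Rsum g.
Proof. exact: big_split. Qed.

Lemma Rsum_reindex f (F : T -> T) : injective F -> Rsum f = Rsum (fun t => f (F t)).
Proof. by move=> F_inj; rewrite /Rsum (reindex_inj F_inj). Qed.

Lemma Rsum_point (j : T) (c : T -> R) : Rsum (fun t => if t == j then c t else 0) = c j.
Proof. by rewrite /Rsum -big_mkcond big_pred1_eq. Qed.

Lemma Rsum_indicator (A : {set T}) (c : R) :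
  Rsum (fun t => if t \in A then c else 0) = INR #|A| * c.
Proof.
rewrite /Rsum -big_mkcond big_const; elim: #|A| => [|m IH] /=; first by ring.
rewrite IH; case: m {IH} => [|m] /=; ring.
Qed.

End RealSums.

(* The infimum of a set of nonnegative reals lies below each of its elements
   (the set is bounded below, so the greatest lower bound exists). *)
Lemma Rinf_le (S : R -> Prop) c : (forall c', S c' -> 0 <= c') -> S c -> Rinf S <= c.
Proof.
move=> S_ge0 Sc.
pose E x := S (- x).
have E_bound : bound E by exists 0 => x /S_ge0; lra.
have E_inh : exists x, E x by exists (- c); rewrite /E Ropp_involutive.
have [m [m_ub m_least]] := completeness E E_bound E_inh.
have glb_ex : exists w, is_glb S w.
  exists (- m); split=> [x Sx | w w_lb].
    have /m_ub : E (- x) by rewrite /E Ropp_involutive.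
    lra.
  suff : m <= - w by lra.
  by apply: m_least => x /w_lb; lra.
by have [lb _] := epsilon_spec (inhabits 0) (is_glb S) glb_ex; apply: lb.
Qed.

Section Hypergraphs.
Variables n k M : nat.
Local Notation V := (hgraph n k M).
Implicit Types x y z u v : V.

Lemma hyp_card x : #|val x| = M.
Proof. by case: x => E /= /andP [_ /eqP]. Qed.

Lemma hyp_mem x h : h \in val x -> #|h| = k.
Proof. by case: x => E /= /andP [/forall_inP E_k _] /E_k /eqP. Qed.

Lemma Hadj_sym u v : Hadj u v -> Hadj v u.
Proof.
move=> /existsP [h1 /existsP [h2 /and4P [h12 h1_in h2_in /eqP E]]].
apply/existsP; exists h2; apply/existsP; exists h1.
by rewrite eq_sym h12 h1_in h2_in E eqxx.
Qed.

Lemma exchange_hyp x h1 h2 :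
  h1 \in val x -> h2 \notin val x -> #|h2| = k -> is_hyp k M (h2 |: (val x :\ h1)).
Proof.
move=> h1x h2x h2k; apply/andP; split.
  apply/forall_inP => h; rewrite !inE => /orP [/eqP -> | /andP [_ /hyp_mem ->]] //.
  by rewrite h2k.
have := hyp_card x; rewrite (cardsD1 h1) h1x add1n => x_card.
by rewrite cardsU1 !inE (negbTE h2x) andbF add1n x_card.
Qed.

Lemma Hadj_exchange x u h1 h2 :
  h1 \in val x -> h2 \notin val x -> val u = h2 |: (val x :\ h1) -> Hadj x u.
Proof.
move=> h1x h2x ux; have h12 : h1 != h2 by apply: contraNneq h2x => <-.
apply/existsP; exists h1; apply/existsP; exists h2.
rewrite h12 ux !inE eqxx h1x (negbTE h12) h2x /= eqxx /=.
apply/eqP/setP => h; rewrite !inE.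
by case: (eqVneq h h2) => [->|//]; rewrite (negbTE h2x) andbF.
Qed.

Lemma Hadj_diff x u : Hadj x u ->
  exists h1 h2, [/\ h1 \in val x, h2 \notin val x & val u = h2 |: (val x :\ h1)].
Proof.
move=> /existsP [h1 /existsP [h2 /and4P [_]]].
rewrite !inE => /andP [_ h1x] /andP [h2x h2u] /eqP E.
by exists h1, h2; rewrite E setD1K.
Qed.

(* H is connected: exchange the hyperedges of x \ y one at a time. *)
Lemma Hadj_connected x y : exists p, path (@Hadj n k M) x p && (last x p == y).
Proof.
have [j] : exists j, #|val x :\: val y| = j by exists #|val x :\: val y|.
elim: j x => [|j IH] x xy_card.
  exists [::]; apply/eqP/val_inj/eqP.
  by rewrite eqEcard !hyp_card leqnn andbT -setD_eq0 -cards_eq0 xy_card.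
have /card_gt0P [h1] : (0 < #|val x :\: val y|)%N by rewrite xy_card.
have yx_card : #|val y :\: val x| = j.+1 by rewrite -xy_card !cardsD !hyp_card setIC.
have /card_gt0P [h2] : (0 < #|val y :\: val x|)%N by rewrite yx_card.
rewrite !inE => /andP [h2x h2y] /andP [h1y h1x].
pose x' : V := exist _ (h2 |: (val x :\ h1)) (exchange_hyp h1x h2x (hyp_mem h2y)).
have x'y_card : #|val x' :\: val y| = j.
  have -> : val x' :\: val y = (val x :\: val y) :\ h1.
    apply/setP => h; rewrite !inE; case: (eqVneq h h2) => [->|_]; first by rewrite h2y !andbF.
    by case: (h != h1); case: (h \in val y).
  by move: xy_card; rewrite (cardsD1 h1 (val x :\: val y)) !inE h1x h1y => -[].
have [p /andP [x'p p_last]] := IH x' x'y_card.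
by exists (x' :: p); rewrite /= (@Hadj_exchange x x' h1 h2) ?x'p.
Qed.

Lemma hdist_le i x y : reach_in i x y -> (hdist x y <= i)%N.
Proof.
move=> reach_i; rewrite /hdist.
have [i_lt | i_ge] := ltnP i #|{: V}|; last first.
  by apply: leq_trans i_ge; rewrite -[X in (_ <= X)%N](size_iota 0) find_size.
by rewrite leqNgt; apply/negP => /(before_find 0%N); rewrite nth_iota // add0n reach_i.
Qed.

Lemma hdist_max x y : (hdist x y <= #|{: V}|)%N.
Proof. by rewrite /hdist -[X in (_ <= X)%N](size_iota 0) find_size. Qed.

Lemma hdist_reach x y : (hdist x y < #|{: V}|)%N -> reach_in (hdist x y) x y.
Proof.
rewrite /hdist => lt_V.
have has_reach : has (fun i => reach_in i x y) (iota 0 #|{: V}|).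
  by rewrite has_find size_iota.
by have := nth_find 0%N has_reach; rewrite nth_iota // add0n.
Qed.

Lemma reach_cat a b x y z : reach_in a x y -> reach_in b y z -> reach_in (a + b) x z.
Proof.
move=> /existsP [p /andP [xp /eqP p_last]] /existsP [q /andP [yq /eqP q_last]].
apply/existsP; exists (cat_tuple p q).
by rewrite /= cat_path last_cat p_last xp yq q_last eqxx.
Qed.

Lemma hdist_triangle x y z : (hdist x z <= hdist x y + hdist y z)%N.
Proof.
have [xy_lt | xy_ge] := ltnP (hdist x y) #|{: V}|; last first.
  by apply: leq_trans (hdist_max x z) (leq_trans xy_ge (leq_addr _ _)).
have [yz_lt | yz_ge] := ltnP (hdist y z) #|{: V}|; last first.
  by apply: leq_trans (hdist_max x z) (leq_trans yz_ge (leq_addl _ _)).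
exact/hdist_le/(reach_cat (hdist_reach xy_lt) (hdist_reach yz_lt)).
Qed.

Lemma hdist_refl x : hdist x x = 0%N.
Proof.
by apply/eqP; rewrite -leqn0; apply: hdist_le; apply/existsP; exists [tuple]; rewrite /= eqxx.
Qed.

Lemma hdist_adj x y : Hadj x y -> (hdist x y <= 1)%N.
Proof. by move=> xy; apply: hdist_le; apply/existsP; exists [tuple y]; rewrite /= xy eqxx. Qed.

Lemma shortest_walk x y :
  exists p, [/\ path (@Hadj n k M) x p, last x p = y & size p = hdist x y].
Proof.
suff /hdist_reach /existsP [p /andP [xp /eqP p_last]] : (hdist x y < #|{: V}|)%N.
  by exists p; rewrite size_tuple.
have [p /andP [xp /eqP]] := Hadj_connected x y.
case: (shortenP xp) => p' xp' p'_uniq _ p'_last.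
have reach_p' : reach_in (size p') x y.
  by apply/existsP; exists (in_tuple p'); rewrite /= xp' p'_last eqxx.
apply: leq_ltn_trans (hdist_le reach_p') _.
by rewrite -ltnS -[(size p').+1]/(size (x :: p')) -(card_uniqP p'_uniq) ltnS max_card.
Qed.

Lemma hdist_gt0 x y : x <> y -> (0 < hdist x y)%N.
Proof.
move=> xy; have [p [_ p_last <-]] := shortest_walk x y.
by case: p p_last => //= /esym.
Qed.

End Hypergraphs.

(* The transposition of two k-sets a and b acts on edge sets; it is an
   automorphism of H which, for a suitable choice of a and b, exchanges two
   given adjacent vertices. *)
Definition swap_edges (n : nat) (a b : {set 'I_n}) (E : {set {set 'I_n}}) :
  {set {set 'I_n}} := [set h | tperm a b h \in E].

Section SwapEdges.
Variable n : nat.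
Implicit Types (a b : {set 'I_n}) (E : {set {set 'I_n}}).

Lemma swap_edgesC a b E : swap_edges a b E = swap_edges b a E.
Proof. by rewrite /swap_edges tpermC. Qed.

Lemma swap_edges_mem a b E h : (tperm a b h \in swap_edges a b E) = (h \in E).
Proof. by rewrite inE tpermK. Qed.

Lemma swap_edgesD1 a b E h : swap_edges a b (E :\ h) = swap_edges a b E :\ tperm a b h.
Proof.
apply/setP => g; rewrite !inE; congr (~~ _ && _).
by rewrite -{1}[h](tpermK a b) (inj_eq perm_inj).
Qed.

Lemma swap_edges_fix a b E : (a \in E) = (b \in E) -> swap_edges a b E = E.
Proof. by move=> ab_E; apply/setP => h; rewrite inE; case: tpermP => [->|->|_ _]. Qed.

Lemma swap_edges_exchange a b E : a \in E -> b \notin E -> swap_edges a b E = b |: (E :\ a).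
Proof.
move=> aE bE; have ab : a != b by apply: contraNneq bE => <-.
apply/setP => h; rewrite !inE; case: tpermP => [->|->|ha hb].
- by rewrite (negbTE ab) eqxx (negbTE bE).
- by rewrite eqxx aE.
- by rewrite (introF eqP hb) (introN eqP ha).
Qed.

End SwapEdges.

Section Swap.
Variables (n k M : nat) (a b : {set 'I_n}).
Hypotheses (a_k : #|a| = k) (b_k : #|b| = k).
Implicit Types u v : hgraph n k M.

Lemma swap_edges_hyp E : is_hyp k M E -> is_hyp k M (swap_edges a b E).
Proof.
move=> /andP [/forall_inP E_k /eqP E_M]; apply/andP; split.
  apply/forall_inP => h; rewrite inE => /E_k.
  by case: tpermP => [->|->|_ _ ->]; rewrite ?a_k ?b_k.
by rewrite -E_M; apply/eqP/(card_preimset _ (@perm_inj _ (tperm a b))).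
Qed.

Definition swapH (u : hgraph n k M) : hgraph n k M :=
  exist _ (swap_edges a b (val u)) (swap_edges_hyp (valP u)).

Lemma swapHK : involutive swapH.
Proof. by move=> u; apply/val_inj/setP => h; rewrite !inE tpermK. Qed.

Lemma swapH_adj u v : Hadj u v -> Hadj (swapH u) (swapH v).
Proof.
move=> /existsP [h1 /existsP [h2 /and4P [h12 h1_in h2_in /eqP E]]].
apply/existsP; exists (tperm a b h1); apply/existsP; exists (tperm a b h2).
rewrite (inj_eq perm_inj) h12 /= !in_setD !swap_edges_mem -!in_setD h1_in h2_in.
by rewrite -!swap_edgesD1 E eqxx.
Qed.

Lemma swapH_fix u : (a \in val u) = (b \in val u) -> swapH u = u.
Proof. by move=> ab_u; apply/val_inj/swap_edges_fix. Qed.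

Lemma swapH_fix_or_adj u : swapH u = u \/ Hadj u (swapH u).
Proof.
have [ab_u | ab_u] := eqVneq (a \in val u) (b \in val u); first by left; apply: swapH_fix.
right; have [au | au] := boolP (a \in val u).
  have bu : b \notin val u by move: ab_u; rewrite au; case: (b \in _).
  by apply: (Hadj_exchange (h1 := a) (h2 := b)) => //=; rewrite swap_edges_exchange.
have bu : b \in val u by move: ab_u; rewrite (negbTE au); case: (b \in _).
by apply: (Hadj_exchange (h1 := b) (h2 := a)) => //=; rewrite swap_edgesC swap_edges_exchange.
Qed.

End Swap.

Definition ksets (n k : nat) : {set {set 'I_n}} := [set h : {set 'I_n} | #|h| == k].

Lemma card_ksets n k : #|ksets n k| = 'C(n, k).
Proof. by rewrite card_draws card_ord. Qed.

Section AdjacentPair.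
Variables (n k M : nat) (x y : hgraph n k M) (a b : {set 'I_n}).
Hypotheses (a_k : #|a| = k) (b_k : #|b| = k).
Hypotheses (a_xy : a \in val x :\: val y) (b_yx : b \in val y :\: val x).
Hypothesis xy_exchange : val x :\ a = val y :\ b.
Local Notation tau := (@swapH n k M a b a_k b_k).
Local Notation tauK := (@swapHK n k M a b a_k b_k).
Implicit Types u : hgraph n k M.

Let ax : a \in val x. Proof. by move: a_xy; rewrite inE => /andP []. Qed.
Let bx : b \notin val x. Proof. by move: b_yx; rewrite inE => /andP []. Qed.
Let b_y : b \in val y. Proof. by move: b_yx; rewrite inE => /andP []. Qed.

Lemma swapH_x : tau x = y.
Proof. by apply: val_inj; rewrite /= swap_edges_exchange // xy_exchange setD1K. Qed.

Lemma swapH_y : tau y = x.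
Proof. by rewrite -swapH_x tauK. Qed.

Lemma Hadj_xy : Hadj x y.
Proof. by apply: (Hadj_exchange ax bx); rewrite -swapH_x /= swap_edges_exchange. Qed.

Definition matching u : hgraph n k M := if (u == x) || (u == y) then u else tau u.

Lemma matchingK : involutive matching.
Proof.
move=> u; rewrite /matching.
have [-> | ux] := eqVneq u x; first by rewrite eqxx.
have [-> | uy] //= := eqVneq u y; first by rewrite eqxx orbT.
have -> : (tau u == x) = false by rewrite -swapH_y (inj_eq (can_inj tauK)) (negbTE uy).
have -> : (tau u == y) = false by rewrite -swapH_x (inj_eq (can_inj tauK)) (negbTE ux).
exact: tauK.
Qed.

Lemma matching_walk u : hwalk x u = hwalk y (matching u).
Proof.
rewrite /hwalk /matching; congr (if _ then _ else _).
have [-> | ux] /= := eqVneq u x; first by rewrite (Hadj_sym Hadj_xy) orbT.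
have [-> | uy] /= := eqVneq u y; first by rewrite eqxx Hadj_xy.
rewrite -{1}swapH_x (inj_eq (can_inj tauK)) (negbTE ux) /=.
apply/idP/idP => [| /(swapH_adj a_k b_k)]; first by rewrite -swapH_x; apply: swapH_adj.
by rewrite swapH_y tauK.
Qed.

Lemma matching_dist u : (hdist u (matching u) <= (matching u != u))%N.
Proof.
rewrite /matching; case: ifP => _; first by rewrite hdist_refl.
have [-> | moved] := eqVneq (tau u) u; first by rewrite hdist_refl.
by case: (swapH_fix_or_adj a_k b_k u) => [/eqP | /hdist_adj //]; rewrite (negbTE moved).
Qed.

Lemma moved_neighbour u : Hadj x u -> u != y -> tau u != u ->
  exists h1 h2, [/\ h1 \in val x :\ a, h2 \in ksets n k :\: (b |: val x)
     & val u = h2 |: (val x :\ h1)].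
Proof.
move=> xu uy moved; have [h1 [h2 [h1x h2x u_E]]] := Hadj_diff xu.
have h2_k : #|h2| = k by apply: (hyp_mem (x := u)); rewrite u_E setU11.
have a_u : (a \in val u) = (a != h1).
  by rewrite u_E !inE ax andbT; case: eqP => [ah2 | //]; rewrite -ah2 ax in h2x.
have b_u : (b \in val u) = (b == h2).
  by rewrite u_E !inE (negbTE bx) andbF orbF.
have ab_u : (a \in val u) != (b \in val u) by apply: contra moved => /eqP /(swapH_fix a_k b_k) ->.
have h1a : h1 != a.
  apply: contra uy => /eqP h1a; apply/eqP/val_inj.
  rewrite -swapH_x /= swap_edges_exchange // u_E -h1a; congr (_ |: _).
  by move: ab_u; rewrite a_u b_u h1a eqxx; case: (eqVneq b h2) => [-> | _].
exists h1, h2; split => //; first by rewrite !inE h1a.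
rewrite !inE h2_k eqxx (negbTE h2x) orbF andbT.
have ah1 : a != h1 by rewrite eq_sym.
by apply: contraTneq ab_u => h2b; rewrite a_u b_u -h2b eqxx ah1.
Qed.

(* Moved neighbours are determined by such pairs (h1, h2): there are at most
   (M-1)(N-M-1) of them. *)
Lemma moved_card :
  (#|[set u | ((u == x) || Hadj x u) && (matching u != u)]| <= (M - 1) * ('C(n, k) - M.+1))%N.
Proof.
set moved := [set u | _].
pose S := val x :\ a.
pose C := ksets n k :\: (b |: val x).
pose exchange (p : {set 'I_n} * {set 'I_n}) := p.2 |: (val x :\ p.1).
have moved_sub : [set val u | u in moved] \subset exchange @: setX S C.
  apply/subsetP => E /imsetP [u]; rewrite inE /matching => /andP [xu_adj moved_u] ->{E}.
  case: (eqVneq u x) xu_adj moved_u => [-> | ux]; first by rewrite /= eqxx.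
  case: (eqVneq u y) => [-> | uy] /= xu moved_u; first by rewrite eqxx in moved_u.
  have [h1 [h2 [h1S h2C u_E]]] := moved_neighbour xu uy moved_u.
  by apply/imsetP; exists (h1, h2); rewrite // in_setX h1S h2C.
rewrite -(card_imset _ val_inj); apply: leq_trans (subset_leq_card moved_sub) _.
apply: leq_trans (leq_imset_card _ _) _; rewrite cardsX.
have -> : #|S| = (M - 1)%N by rewrite -(hyp_card x) (cardsD1 a (val x)) ax add1n subn1.
suff -> : #|C| = ('C(n, k) - M.+1)%N by [].
rewrite cardsD card_ksets (setIidPr _) ?cardsU1 ?bx ?hyp_card //.
by apply/subsetP => h; rewrite !inE => /orP [/eqP -> | /hyp_mem ->]; rewrite ?b_k.
Qed.

End AdjacentPair.

(* A bijection F of V(H) carrying m1 onto m2 defines a coupling of m1 and m2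
   supported on the graph of F, so its cost bounds W(m1, m2) from above. *)
Section Transport.
Variables n k M : nat.
Local Notation V := (hgraph n k M).
Implicit Types (m : V -> R) (F G : V -> V).

Definition transports m1 m2 F : Prop := injective F /\ forall u, m1 u = m2 (F u).

Definition move_cost m F : R := Rsum (fun u => m u * INR (hdist u (F u))).

Lemma transport_le_cost m1 m2 F :
  (forall u, 0 <= m1 u) -> transports m1 m2 F -> transport m1 m2 <= move_cost m1 F.
Proof.
move=> m1_ge0 [F_inj m1_F]; have [F' FK F'K] := injF_bij F_inj.
apply: Rinf_le.
  move=> c [A [[A_ge0 _] ->]]; do 2![apply: Rsum_ge0 => ?].
  by apply: Rmult_le_pos => //; apply: pos_INR.
exists (fun u v => if v == F u then m1 u else 0); split; [split; [|split] |].
- by move=> u v; case: ifP => _; [apply: m1_ge0 | apply: Rle_refl].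
- by move=> u; rewrite Rsum_point.
- move=> v; rewrite (Rsum_ext (g := fun u => if u == F' v then m1 u else 0)).
    by rewrite Rsum_point m1_F F'K.
  by move=> u; rewrite -{1}(F'K v) (inj_eq F_inj) eq_sym.
rewrite /move_cost; apply: Rsum_ext => u.
rewrite (Rsum_ext (g := fun v => if v == F u then m1 u * INR (hdist u v) else 0)).
  by rewrite Rsum_point.
by move=> v; case: eqP => _; [|rewrite Rmult_0_l].
Qed.

Lemma transports_comp m1 m2 m3 F G :
  transports m1 m2 F -> transports m2 m3 G -> transports m1 m3 (G \o F).
Proof.
move=> [F_inj m1_F] [G_inj m2_G]; split; first exact: inj_comp.
by move=> u; rewrite m1_F m2_G.
Qed.

(* The cost of a composite is at most the sum of the costs, by the triangle
   inequality for hdist and reindexing the second sum along F. *)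
Lemma move_cost_comp m1 m2 F G : (forall u, 0 <= m1 u) -> transports m1 m2 F ->
  move_cost m1 (G \o F) <= move_cost m1 F + move_cost m2 G.
Proof.
move=> m1_ge0 [F_inj m1_F].
have -> : move_cost m2 G = Rsum (fun u => m1 u * INR (hdist (F u) (G (F u)))).
  by rewrite /move_cost (Rsum_reindex _ F_inj); apply: Rsum_ext => u; rewrite m1_F.
rewrite /move_cost -Rsum_add; apply: Rsum_le => u; cbv beta.
rewrite -Rmult_plus_distr_l -plus_INR; apply: Rmult_le_compat_l => //.
exact/le_INR/leP/hdist_triangle.
Qed.

End Transport.

Definition walk_mass (n k M : nat) : R := / INR (M * ('C(n, k) - M) + 1).

Section WalkTransport.
Variables n k M : nat.
Local Notation V := (hgraph n k M).
Local Notation c := (walk_mass n k M).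
Local Notation edge_bound := (INR ((M - 1) * ('C(n, k) - M.+1)) * c).

Lemma walk_mass_gt0 : 0 < c.
Proof. by apply/Rinv_0_lt_compat/lt_0_INR/ltP; rewrite addn1. Qed.

Lemma hwalk_ge0 (x u : V) : 0 <= hwalk x u.
Proof. by rewrite /hwalk; case: ifP => _; [apply/Rlt_le/walk_mass_gt0 | apply: Rle_refl]. Qed.

(* Along an edge of H the walk can be transported at cost (M-1)(N-M-1)/(M(N-M)+1):
   only the neighbours moved by the matching travel, each by one step. *)
Lemma edge_cost (x y : V) : Hadj x y ->
  exists F, transports (hwalk x) (hwalk y) F /\ move_cost (hwalk x) F <= edge_bound.
Proof.
move=> /existsP [a /existsP [b /and4P [_ a_xy b_yx /eqP xy_E]]].
have a_k : #|a| = k by move: a_xy; rewrite inE => /andP [_ /hyp_mem].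
have b_k : #|b| = k by move: b_yx; rewrite inE => /andP [_ /hyp_mem].
pose F := matching x y a_k b_k.
exists F; split.
  by split; [exact/can_inj/(matchingK a_k b_k a_xy b_yx xy_E) | exact: matching_walk].
set moved := [set u | ((u == x) || Hadj x u) && (F u != u)].
apply: (Rle_trans _ (Rsum (fun u => if u \in moved then c else 0))).
  apply: Rsum_le => u; rewrite /hwalk inE.
  have := matching_dist x y a_k b_k u; rewrite -/F.
  case: ((u == x) || Hadj x u); last by rewrite Rmult_0_l => _; apply: Rle_refl.
  case: (F u != u) => d_le.
    rewrite -[X in _ <= X]Rmult_1_r; apply: Rmult_le_compat_l; first exact/Rlt_le/walk_mass_gt0.
    exact/(le_INR _ 1)/leP.
  by move: d_le; rewrite leqn0 => /eqP ->; rewrite /= Rmult_0_r; apply: Rle_refl.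
rewrite Rsum_indicator; apply/Rmult_le_compat_r; first exact/Rlt_le/walk_mass_gt0.
by apply/le_INR/leP; apply: (moved_card a_k b_k a_xy b_yx xy_E).
Qed.

Lemma walk_cost (x : V) p : path (@Hadj n k M) x p ->
  exists F, transports (hwalk x) (hwalk (last x p)) F /\
            move_cost (hwalk x) F <= INR (size p) * edge_bound.
Proof.
elim: p x => [|y p IH] x.
  move=> _; exists id; split; first by split.
  have -> : move_cost (hwalk x) id = 0.
    by rewrite /move_cost /Rsum big1 // => u _; rewrite hdist_refl Rmult_0_r.
  by rewrite Rmult_0_l; apply: Rle_refl.
move=> /andP [xy walk_p].
have [F [F_tr F_cost]] := edge_cost xy.
have [G [G_tr G_cost]] := IH y walk_p.
exists (G \o F); split; first exact: transports_comp F_tr G_tr.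
apply: Rle_trans (move_cost_comp G (@hwalk_ge0 x) F_tr) _.
have -> : INR (size (y :: p)) = INR (size p) + 1 by rewrite -S_INR.
lra.
Qed.

End WalkTransport.

(* (M-1)(N-M-1) + N = M(N-M) + 1, so the edge bound equals 1 - N/(M(N-M)+1). *)
Lemma edge_bound_eq (N M : nat) : (1 <= M)%N -> (M <= N - 1)%N ->
  INR ((M - 1) * (N - M.+1)) * / INR (M * (N - M) + 1) = 1 - INR N / INR (M * (N - M) + 1).
Proof.
move=> M_ge1 M_lt.
have nat_eq : ((M - 1) * (N - M.+1) + N = M * (N - M) + 1)%N.
  have [q ->] : exists q, N = (M + q).+1 by exists (N - M.+1)%N; lia.
  have [p ->] : exists p, M = p.+1 by exists M.-1; rewrite prednK.
  have -> : (p.+1 - 1 = p)%N by lia.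
  have -> : ((p.+1 + q).+1 - p.+2 = q)%N by lia.
  have -> : ((p.+1 + q).+1 - p.+1 = q.+1)%N by lia.
  nia.
have D_gt0 : 0 < INR (M * (N - M) + 1) by apply/lt_0_INR/ltP; rewrite addn1.
rewrite -nat_eq plus_INR in D_gt0 *; field; lra.
Qed.

Theorem mainTheorem7 (k n M : nat) :
  (2 <= k)%N -> (k <= n)%N -> (1 <= M)%N -> (M <= 'C(n, k) - 1)%N ->
  forall H1 H2 : hgraph n k M, H1 <> H2 ->
  (INR 'C(n, k) / INR (M * ('C(n, k) - M) + 1)%N <= kappa H1 H2)%R.
Proof.
move=> _ _ M_ge1 M_le H1 H2 H12.
have [p [walk_p last_p size_p]] := shortest_walk H1 H2.
have [F [F_tr F_cost]] := walk_cost walk_p; rewrite last_p size_p in F_tr F_cost.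
have W_le := Rle_trans _ _ _ (transport_le_cost (@hwalk_ge0 _ _ _ H1) F_tr) F_cost.
rewrite /walk_mass edge_bound_eq // in W_le.
have d_gt0 : 0 < INR (hdist H1 H2) by apply/lt_0_INR/ltP/hdist_gt0.
set W := transport _ _ in W_le *; set d := INR (hdist H1 H2) in W_le d_gt0 *.
have : W / d <= 1 - INR 'C(n, k) / INR (M * ('C(n, k) - M) + 1).
  apply: (Rmult_le_reg_r d) => //; rewrite /Rdiv Rmult_assoc Rinv_l; lra.
rewrite /kappa -/W -/d; lra.
Qed.
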